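(* Let $X$ be a complex Banach space and $T:X\to X$ a bounded linear operator which is an $m$-isometry and is recurrent. Then $T$ is a surjective isometry.
   Context: For $m\in\mathbb N$ and $p\in[1,\infty)$, $T$ is an $(m,p)$-isometry if $\sum_{k=0}^m(-1)^{m-k}\binom mk\|T^kx\|^p=0$ for every $x\in X$; $T$ is an $m$-isometry if it is an $(m,p)$-isometry for some $p\in[1,\infty)$. $T$ is recurrent if for every non-empty open $U\subset X$ there is a positive integer $k$ with $U\cap T^{-k}(U)\neq\emptyset$. *)

From mathcomp Require Import all_boot all_algebra.
From mathcomp Require Import all_classical all_reals all_analysis.
From mathcomp Require Export complex.
Export numFieldNormedType.Exports.
Import GRing.Theory Num.Theory.

Set Implicit Arguments.
Unset Strict Implicit.
Unset Printing Implicit Defensive.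

Local Open Scope ring_scope.
Local Open Scope complex_scope.
Local Open Scope classical_set_scope.

(* The norm of a vector in a complex normed space, as a real number
   (the library norm takes values in R[i], with zero imaginary part). *)
Definition nrm (R : realType) (V : normedModType R[i]) (x : V) : R :=
  complex.Re `|x|.

Definition bounded_op (R : realType) (V : normedModType R[i]) (T : V -> V) : Prop :=
  exists M : R, forall x : V, nrm (T x) <= M * nrm x.

Definition mp_isometry (R : realType) (V : normedModType R[i]) (T : V -> V)
    (m : nat) (p : R) : Prop :=
  forall x : V,
    \sum_(k < m.+1) ((-1) ^+ (m - k) * ('C(m, k))%:R * (nrm (iter k T x)) `^ p) = 0.

Definition m_isometry (R : realType) (V : normedModType R[i]) (T : V -> V)
    (m : nat) : Prop :=
  exists p : R, 1 <= p /\ mp_isometry T m p.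

Definition recurrent (R : realType) (V : normedModType R[i]) (T : V -> V) : Prop :=
  forall U : set V, open U -> U !=set0 ->
    exists k : nat, (0 < k)%N /\ (U `&` (iter k T) @^-1` U) !=set0.

From mathcomp Require Import all_boot all_algebra.
From mathcomp Require Import all_classical all_reals all_analysis.
From mathcomp Require Import complex.
From mathcomp Require Import lra.
Import order.Order.TTheory GRing.Theory Num.Theory.
Local Open Scope ring_scope.
Local Open Scope complex_scope.
Local Open Scope classical_set_scope.

(* For y in X let a_y(n) = ||T^n y||^p.  The (m,p)-isometry identity says that
   the m-th forward difference of a_y vanishes at 0 for every y, hence (applied
   to T^n y) everywhere, so a_y is a polynomial in n.  Suppose the (j+1)-st
   differences of all a_y vanish, j > 0.  Then the j-th difference of a_x is a
   constant c.  If c < 0, a_x tends to -oo although it is nonnegative.  If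
   c > 0, all lower differences tend to +oo, so at some N the differences of
   orders 1..j are positive and a_x(N) > (||x|| + 1)^p; by continuity this holds
   for all y near x as well, and then a_y is nondecreasing from N on, so T^k y
   never returns to the unit ball around x for k >= N, against recurrence.
   Hence c = 0 for every x, and descending to j = 1 gives ||T y|| = ||y||.
   Recurrence also makes the range of T dense, and the range of an isometry of
   a Banach space is closed. *)

Section RealNorm.
Context {R : realType} {X : normedModType R[i]}.
Implicit Types u v x y : X.

Lemma normE v : `|v| = (nrm v)%:C.
Proof.
rewrite /nrm; move: (normr_ge0 v); case: (`|v|) => a b.
by rewrite lecE /= => /andP[/eqP -> _].
Qed.

Lemma nrm_ge0 v : 0 <= nrm v.
Proof. by move: (normr_ge0 v); rewrite normE lecE /= => /andP[]. Qed.

Lemma ler_nrmD u v : nrm (u + v) <= nrm u + nrm v.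
Proof. by rewrite -lecR rmorphD /= -!normE ler_normD. Qed.

Lemma nrmBC u v : nrm (u - v) = nrm (v - u).
Proof. by rewrite /nrm distrC. Qed.

Lemma ler_nrm_dist u v : `|nrm u - nrm v| <= nrm (u - v).
Proof.
rewrite ler_norml; apply/andP; split.
  by have := ler_nrmD (v - u) u; rewrite subrK nrmBC; lra.
by have := ler_nrmD (u - v) v; rewrite subrK; lra.
Qed.

Lemma nbhs_nrmP x (P : X -> Prop) :
  nbhs x P <-> exists2 e : R, 0 < e & forall y, nrm (x - y) < e -> P y.
Proof.
rewrite nbhs_ballP; split.
  move=> [e /= e0 H]; exists (complex.Re e).
    by move: e0; rewrite ltcE /= => /andP[].
  move=> y hy; apply: H; rewrite -ball_normE /= normE.
  move: e0; case: e hy => a b /= hy; rewrite ltcE /= => /andP[/eqP b0 _].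
  by rewrite ltcE /= b0 eqxx hy.
move=> [e e0 H]; exists e%:C; first by rewrite /= ltcE /= eqxx.
by move=> y; rewrite -ball_normE /= normE ltcR; exact: H.
Qed.

Lemma nrm_continuous : continuous (@nrm R X).
Proof.
move=> x; apply/cvgrPdist_lt => e e0; apply/nbhs_nrmP; exists e => // y.
exact: le_lt_trans (ler_nrm_dist _ _).
Qed.

End RealNorm.

Section ForwardDifference.
Context {R : realType}.
Implicit Types (a : nat -> R) (c : R).

Definition fdiff a (j n : nat) : R :=
  \sum_(k < j.+1) (-1) ^+ (j - k) * ('C(j, k))%:R * a (k + n)%N.

Lemma fdiff0 a n : fdiff a 0 n = a n.
Proof. by rewrite /fdiff big_ord1 /= bin0 expr0 !mul1r. Qed.

Lemma fdiffS a j n : fdiff a j.+1 n = fdiff a j n.+1 - fdiff a j n.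
Proof.
rewrite /fdiff big_ord_recl /= subn0 bin0 mulr1.
under eq_bigr => k _ do rewrite /bump /= add1n subSS binS natrD mulrDr mulrDl.
rewrite big_split /=.
under [X in _ + (_ + X)]eq_bigr => k _ do rewrite addSnnS.
rewrite [X in _ = _ - X]big_ord_recl /= subn0 bin0 mulr1.
rewrite big_ord_recr /= bin_small // mulr0 mul0r addr0.
under [X in _ = _ - (_ + X)]eq_bigr => k _ do rewrite /bump /= add1n.
have -> : \sum_(i < j) (-1) ^+ (j - i) * ('C(j, i.+1))%:R * a (i.+1 + n)%N =
   - \sum_(i < j) (-1) ^+ (j - i.+1) * ('C(j, i.+1))%:R * a (i.+1 + n)%N.
  rewrite -sumrN; apply: eq_bigr => k _.
  by rewrite -(subnSK (ltn_ord k)) exprS mulN1r !mulNr.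
rewrite exprS mulN1r !mulNr; lra.
Qed.

Lemma fdiffSn a j n : fdiff a j n.+1 = fdiff a j n + fdiff a j.+1 n.
Proof. by rewrite fdiffS addrC subrK. Qed.

Lemma fdiffN a j n : fdiff (fun k => - a k) j n = - fdiff a j n.
Proof. by rewrite /fdiff -sumrN; apply: eq_bigr => k _; rewrite mulrN. Qed.

Lemma fdiff_shift a j n : fdiff a j n = fdiff (fun k => a (k + n)%N) j 0.
Proof. by apply: eq_bigr => k _; rewrite addn0. Qed.

Lemma fdiff_const a j : (forall n, fdiff a j.+1 n = 0) ->
  forall n, fdiff a j n = fdiff a j 0.
Proof. by move=> top0; elim=> [//|n IH]; rewrite fdiffSn top0 addr0. Qed.

Lemma cvgry_increments a c : 0 < c ->
  (\forall n \near \oo, c <= a n.+1 - a n) -> a @ \oo --> +oo.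
Proof.
move=> c0 [N _ incr]; apply/cvgryPge => A.
have grow s : a N + s%:R * c <= a (N + s)%N.
  elim: s => [|s IH]; first by rewrite mul0r addr0 addn0.
  have := incr (N + s)%N (leq_addr _ _).
  by rewrite addnS mulrSr mulrDl mul1r; move: IH; lra.
have [s0 _ large] := nbhs_infty_gtr ((A - a N) / c).
exists (N + s0)%N => // n /= Nn.
have Nn' : (N <= n)%N by exact: leq_trans (leq_addr _ _) Nn.
rewrite -(subnKC Nn'); apply: le_trans (grow _); rewrite -lerBlDl -ler_pdivrMr //.
by apply/ltW/large; rewrite /= leq_subRL // addnC.
Qed.

(* The [j]-th difference is the constant [c > 0], so the [(j-1)]-st one grows by
   [c] at each step; below that, the increments are eventually at least [1]. *)
Lemma fdiff_cvgry a j : (forall n, fdiff a j.+1 n = 0) -> 0 < fdiff a j 0 ->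
  forall i, (i < j)%N -> fdiff a i n @[n --> \oo] --> +oo.
Proof.
move=> top0 c0.
suff cvg_below d : (d < j)%N -> fdiff a (j - d.+1) n @[n --> \oo] --> +oo.
  move=> i ij; have := cvg_below (j - i.+1)%N.
  by rewrite subnSK // subKn ?(ltnW ij) //; apply; exact: leq_subr.
elim: d => [|d IH] dj.
  apply: (@cvgry_increments (fdiff a (j - 1)) _ c0); apply: nearW => n.
  by rewrite -fdiffS subn1 prednK // (fdiff_const _ _ top0).
apply: (@cvgry_increments (fdiff a (j - d.+2)) _ ltr01).
have /cvgryPge/(_ 1) := IH (ltnW dj); apply: filterS => n.
by rewrite -fdiffS subnSK.
Qed.

Lemma fdiff_top_ge0 a j : (forall n, 0 <= a n) -> (0 < j)%N ->
  (forall n, fdiff a j.+1 n = 0) -> 0 <= fdiff a j 0.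
Proof.
move=> a_ge0 j0 top0; rewrite leNgt; apply/negP => neg.
have top0N n : fdiff (fun k => - a k) j.+1 n = 0 by rewrite fdiffN top0 oppr0.
have c0 : 0 < fdiff (fun k => - a k) j 0 by rewrite fdiffN oppr_gt0.
have /cvgryPge/(_ 1) [N _ big] := fdiff_cvgry _ _ top0N c0 _ j0.
by have := big N (leqnn N); rewrite /= fdiff0; have := a_ge0 N; lra.
Qed.

Lemma fdiff_large_increasing a j L : (0 < j)%N -> (forall n, fdiff a j.+1 n = 0) ->
  0 < fdiff a j 0 ->
  exists N, L < a N /\ forall i, (0 < i <= j)%N -> 0 < fdiff a i N.
Proof.
move=> j0 top0 c0; set L' := `|L| + 1.
have L'_gt0 : 0 < L' by rewrite ltr_pwDr ?normr_ge0.
have LL' : L < L' by rewrite (le_lt_trans (ler_norm L)) // ltrDl.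
have : \forall n \near \oo, forall i : 'I_j, L' <= fdiff a i n.
  apply: filter_forall => i.
  by move/cvgryPge: (fdiff_cvgry _ _ top0 c0 _ (ltn_ord i)); apply.
move=> [N _ /(_ N (leqnn N)) /= large]; exists N; split.
  by rewrite -fdiff0; apply: lt_le_trans LL' (large (Ordinal j0)).
move=> i /andP[i0]; rewrite leq_eqVlt => /orP[/eqP ->|ij].
  by rewrite (fdiff_const _ _ top0).
exact: lt_le_trans L'_gt0 (large (Ordinal ij)).
Qed.

Lemma fdiff_nondecreasing a j N : (0 < j)%N -> (forall n, fdiff a j.+1 n = 0) ->
  (forall i, (0 < i <= j)%N -> 0 < fdiff a i N) ->
  forall n, (N <= n)%N -> a N <= a n.
Proof.
move=> j0 top0 pos.
have pos_after s i : (0 < i <= j)%N -> 0 < fdiff a i (N + s).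
  elim: s i => [|s IH] i ij; first by rewrite addn0 pos.
  rewrite addnS fdiffSn; have [lt|ge] := ltnP i j.
    by rewrite addr_gt0 ?IH // (andP ij).1.
  have -> : i = j by apply/eqP; rewrite eqn_leq (andP ij).2.
  by rewrite top0 addr0 IH // j0 leqnn.
move=> n /subnKC <-; elim: (n - N)%N => [|s IH]; first by rewrite addn0.
apply: le_trans IH _; rewrite addnS -[X in _ <= X]fdiff0 fdiffSn fdiff0.
by rewrite lerDl ltW // pos_after // j0.
Qed.

End ForwardDifference.

Section Limits.
Context {R : realType} {I : Type} (F : set_system I) {FF : Filter F}.

Lemma cvg_powR (f : I -> R) (l p : R) : 0 < p -> (forall t, 0 <= f t) -> 0 <= l ->
  f @ F --> l -> (fun t => f t `^ p) @ F --> l `^ p.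
Proof.
move=> p0 f_ge0 l_ge0 fl.
have [l0|l_neq0] := eqVneq l 0.
  subst l; rewrite powR0 ?gt_eqF //; apply/cvgrPdist_lt => e e0.
  move/cvgrPdist_lt: fl => /(_ _ (powR_gt0 (p^-1) e0)); apply: filterS => t.
  rewrite !sub0r !normrN !ger0_norm ?powR_ge0 // => ft.
  have -> : e = (e `^ p^-1) `^ p by rewrite -powRrM mulVf ?gt_eqF // powRr1 ?ltW.
  by apply: gt0_ltr_powR; rewrite ?nnegrE ?powR_ge0.
have l_gt0 : 0 < l by rewrite lt_neqAle eq_sym l_neq0.
have : (fun t => expR (p * ln (f t))) @ F --> expR (p * ln l).
  apply: continuous_cvg; first exact: continuous_expR.
  by apply: cvgM; [exact: cvg_cst | apply: continuous_cvg; [exact: continuous_ln|]].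
have -> : l `^ p = expR (p * ln l) by rewrite /powR gt_eqF // mulrC.
move=> h; apply: cvg_trans h; apply: near_eq_cvg.
move/cvgrPdist_lt: fl => /(_ _ l_gt0); apply: filterS => t.
rewrite ltr_norml => /andP[_]; rewrite gtrBl => ft.
by rewrite /powR gt_eqF // mulrC.
Qed.

Lemma cvg_fdiff (a : I -> nat -> R) (l : nat -> R) j n :
  (forall k, (fun t => a t k) @ F --> l k) ->
  (fun t => fdiff (a t) j n) @ F --> fdiff l j n.
Proof.
move=> al; apply: cvg_big => [|k _]; first exact: add_continuous.
by apply: cvgM; [exact: cvg_cst | exact: al].
Qed.

End Limits.

Lemma continuous_iter {S : topologicalType} (f : S -> S) k :
  continuous f -> continuous (iter k f).
Proof.
move=> fC; elim: k => [|k IH] x; first exact: cvg_id.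
exact: continuous_comp (IH x) (fC _).
Qed.

Section Orbits.
Context {R : realType} {X : normedModType R[i]}.
Implicit Types (f : X -> X) (x y : X).

Lemma bounded_op_continuous (T : {linear X -> X}) : bounded_op T -> continuous T.
Proof.
move=> [M TM] x P /nbhs_nrmP [e e0 Pe]; apply/nbhs_nrmP.
have K0 : 0 < `|M| + 1 by rewrite ltr_pwDr // normr_ge0.
exists (e / (`|M| + 1)) => [|y xy]; first exact: divr_gt0.
apply: Pe; rewrite -linearB; apply: le_lt_trans (TM _) _.
rewrite ltr_pdivlMr // mulrC in xy; apply: le_lt_trans xy.
by apply: ler_wpM2r; [exact: nrm_ge0 | rewrite (le_trans (ler_norm M)) // lerDl].
Qed.

Definition orbit_pnorm f (p : R) y (n : nat) : R := nrm (iter n f y) `^ p.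

Lemma orbit_pnorm_iter f p y n k :
  orbit_pnorm f p (iter n f y) k = orbit_pnorm f p y (k + n).
Proof. by rewrite /orbit_pnorm iterD. Qed.

Lemma cvg_orbit_pnorm f p k x : continuous f -> 0 < p ->
  orbit_pnorm f p y k @[y --> x] --> orbit_pnorm f p x k.
Proof.
move=> fC p0; apply: cvg_powR => //; first by move=> ?; exact: nrm_ge0.
  exact: nrm_ge0.
exact: cvg_comp (continuous_iter f k fC x) (nrm_continuous _).
Qed.

Lemma recurrent_return f : recurrent f -> continuous f ->
  forall N x (U : set X), nbhs x U -> exists y k, [/\ U y, (N <= k)%N & U (iter k f y)].
Proof.
move=> rec fC N x U /nbhs_interior xU.
suff [y [k [Uy Nk Uky]]] : exists y k, [/\ U° y, (N <= k)%N & U° (iter k f y)].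
  by exists y, k; split => //; exact: interior_subset.
elim: N (U°) (open_interior U) (ex_intro _ x (nbhs_singleton xU)) => [|N IH] V oV [v Vv].
  by exists v, 0%N.
have [k1 [k1_gt0 [y1 [Vy1 Vky1]]]] := rec V oV (ex_intro _ v Vv).
have oW : open (V `&` iter k1 f @^-1` V).
  by apply: openI => //; apply: open_comp => // z _; exact: continuous_iter.
have [y [k [[Vy Wy] Nk [Vky Wky]]]] := IH _ oW (ex_intro _ y1 (conj Vy1 Vky1)).
by exists y, (k1 + k)%N; split; rewrite ?iterD // -add1n leq_add.
Qed.

End Orbits.

Section Recurrence.
Context {R : realType} {X : normedModType R[i]} (f : X -> X) (p : R).
Hypotheses (fC : continuous f) (rec : recurrent f) (p_gt0 : 0 < p).
Local Notation a := (orbit_pnorm f p).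

Lemma orbit_fdiff_eq0 j : (forall y, fdiff (a y) j 0 = 0) ->
  forall y n, fdiff (a y) j n = 0.
Proof.
move=> top0 y n; rewrite fdiff_shift -(top0 (iter n f y)); congr fdiff.
by apply/funext => k; rewrite orbit_pnorm_iter.
Qed.

(* Otherwise the orbits of all [y] near [x] would be eventually outside the
   ball of radius [1] around [x], against recurrence. *)
Lemma recurrent_fdiff_top_le0 j x : (0 < j)%N ->
  (forall y n, fdiff (a y) j.+1 n = 0) -> fdiff (a x) j 0 <= 0.
Proof.
move=> j0 top0; rewrite leNgt; apply/negP => c0.
set B := (nrm x + 1) `^ p.
have [N [BaN posN]] := fdiff_large_increasing _ _ B j0 (top0 x) c0.
have cvg_fdiff_x i : fdiff (a y) i N @[y --> x] --> fdiff (a x) i N.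
  by apply: cvg_fdiff => k; exact: cvg_orbit_pnorm.
have pos_near : \forall y \near x, forall i : 'I_j.+1,
    (0 < i)%N -> 0 < fdiff (a y) i N.
  apply: filter_forall => i; have [->|i0] := posnP i; first exact: nearW.
  have i_pos : (0 < i <= j)%N by rewrite i0 -ltnS ltn_ord.
  by apply: filterS (cvgr_gt _ (cvg_fdiff_x i) 0 (posN i i_pos)) => y ? _.
have large_near : \forall y \near x, B < a y N.
  exact: cvgr_gt _ (cvg_orbit_pnorm _ _ _ _ fC p_gt0) _ BaN.
have close_near : \forall y \near x, nrm (x - y) < 1 by apply/nbhs_nrmP; exists 1.
have [y [k [[[posy Bay] _] Nk [_ close_k]]]] :=
  recurrent_return _ rec fC N _ _ (filterI (filterI pos_near large_near) close_near).
have : a y N <= a y k.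
  apply: (fdiff_nondecreasing _ _ _ j0 (top0 y)) Nk => i /andP[i0 ij].
  exact: (posy (@Ordinal j.+1 i ij) i0).
have : a y k <= B.
  apply: ge0_ler_powR; rewrite ?nnegrE ?addr_ge0 ?nrm_ge0 ?(ltW p_gt0) //.
  have := ler_nrmD (iter k f y - x) x; rewrite subrK => /le_trans; apply.
  by rewrite addrC lerD2l nrmBC ltW.
move=> akB aNk; have := lt_le_trans Bay (le_trans aNk akB).
by rewrite ltxx.
Qed.

Lemma recurrent_fdiff_eq0 j : (0 < j)%N ->
  (forall y, fdiff (a y) j.+1 0 = 0) -> forall y, fdiff (a y) j 0 = 0.
Proof.
move=> j0 /orbit_fdiff_eq0 top0 y; apply/eqP; rewrite eq_le recurrent_fdiff_top_le0 //=.
by apply: (fdiff_top_ge0 _ _ _ j0 (top0 y)) => n; exact: powR_ge0.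
Qed.

Lemma recurrent_fdiff_isometry m :
  (forall y, fdiff (a y) m 0 = 0) -> forall y, nrm (f y) = nrm y.
Proof.
move=> top0 y; apply: (powR_injective p_gt0); rewrite ?nnegrE ?nrm_ge0 //.
elim: m top0 y => [|[|j] IH] top0 y.
- by have := top0 y; have := top0 (f y); rewrite !fdiff0 /orbit_pnorm /= => -> ->.
- by have /eqP := top0 y; rewrite fdiffS !fdiff0 subr_eq0 => /eqP.
- by apply: IH; exact: recurrent_fdiff_eq0.
Qed.

Lemma recurrent_dense_range y e : 0 < e -> exists z, nrm (f z - y) < e.
Proof.
move=> e0; have near_y : nbhs y [set w | nrm (y - w) < e] by apply/nbhs_nrmP; exists e.
have [w [k [_ k_gt0 /= yk]]] := recurrent_return _ rec fC 1 _ _ near_y.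
by exists (iter k.-1 f w); rewrite -iterS prednK // nrmBC.
Qed.

End Recurrence.

Section IsometryOnto.
Context {R : realType} {X : completeNormedModType R[i]} (f : X -> X).
Hypothesis f_iso : forall u v, nrm (f u - f v) = nrm (u - v).

Lemma isometry_continuous : continuous f.
Proof.
move=> x P /nbhs_nrmP [e e0 Pe]; apply/nbhs_nrmP; exists e => // y xy.
by apply: Pe; rewrite f_iso.
Qed.

Lemma isometry_cauchy (F : set_system X) : Filter F -> cauchy (f @ F) -> cauchy F.
Proof.
move=> FF /cauchy_ballP fF; apply/cauchy_ballP => e e0.
have [[A B] /= [FA FB] AB] := fF e e0.
exists (f @^-1` A, f @^-1` B) => // -[a b] /= [Aa Bb].
by have := AB (f a, f b) (conj Aa Bb); rewrite -!ball_normE /= !normE f_iso.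
Qed.

(* The range of an isometry of a complete space is complete, hence closed. *)
Lemma isometry_dense_range_surjective :
  (forall y e, 0 < e -> exists z, nrm (f z - y) < e) -> forall y, exists x, f x = y.
Proof.
move=> dense y.
have /choice [u fu_y] n : exists z, nrm (f z - y) < n.+1%:R^-1.
  by apply: dense; rewrite invr_gt0 ltr0n.
have fu_cvg : f \o u @ \oo --> y.
  move=> P /nbhs_nrmP [e e0 Pe]; have := near_infty_natSinv_lt (PosNum e0).
  by apply: filterS => n ne; apply: Pe; rewrite nrmBC (lt_trans (fu_y n)).
have /cauchy_cvgP u_cvg : cauchy (u @ \oo).
  by apply: isometry_cauchy; apply: cvg_cauchy; apply/cvg_ex; exists y.
have fu_lim : f \o u @ \oo --> f (lim (u @ \oo)).
  exact: cvg_comp u_cvg (isometry_continuous _).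
by exists (lim (u @ \oo)); apply: cvg_unique fu_lim fu_cvg.
Qed.

End IsometryOnto.

Theorem proposition8p5 (R : realType) (X : completeNormedModType R[i])
    (T : {linear X -> X}) (m : nat) :
  bounded_op T -> m_isometry T m -> recurrent T ->
  (forall x : X, nrm (T x) = nrm x) /\ (forall y : X, exists x : X, T x = y).
Proof.
move=> T_bounded [p [p_ge1 T_mp]] T_rec.
have T_cont := bounded_op_continuous _ T_bounded.
have p_gt0 : 0 < p by exact: lt_le_trans ltr01 p_ge1.
have T_iso : forall x, nrm (T x) = nrm x.
  apply: (recurrent_fdiff_isometry _ _ T_cont T_rec p_gt0 m) => y.
  by rewrite -(T_mp y); apply: eq_bigr => k _; rewrite addn0.
split=> //; apply: isometry_dense_range_surjective.
  by move=> u v; rewrite -linearB T_iso.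
exact: recurrent_dense_range.
Qed.
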